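(* For every $i\in\mathcal U$ and every $a\in L$: $\exists u\,T(i,a,u)$ holds if and only if the sequent $B\to\exists u\,T(i,a,u)$ is provable.
   Context: The theory $\mathbf B$: first-order theory with binary infix function symbol ''$.$'', predicates $T(i,a,u)$, $U(x,s,z,q,j,i,u)$, and single axiom $B$, the conjunction of the universal closures of: (1) $T(i,a,u)\supset U(\emptyset,\emptyset,a.\emptyset,1,i,i,u)$; (2) $U(\emptyset,\emptyset,a.\emptyset,1,i,i,u)\supset T(i,a,u)$; (3) $U(x,s,z,0,i,i,x)$; (4) $U(x,v,r.z,p,i,i,u)\supset U(x.v,s,z,q,\,q.s.p.r.0.j,\,i,u)$; (5) $U(x.r,v,z,p,i,i,u)\supset U(x,s,v.z,q,\,q.s.p.r.1.j,\,i,u)$; (6) $U(x,s,z,q,j,i,u)\supset U(x,s,z,q,\,q'.s'.p.r.d.j,\,i,u)$. $L$ is the set of right-tape lists (built from $\emptyset$ by $s.z$ with $s$ a tape symbol), $M\subset L$ the set of Turing machine codes (lists of quintuples $q.s.p.r.d$ with states $p,q$, symbols $r,s$, move $d\in\{0,1\}$); in the intended interpretation $T(i,a,u)$ means machine $i$ on input $a$ halts with output $u$. $\mathcal U$ is the set of deterministic Turing machine codes (no two quintuples with the same $q.s$ and different $p.r.d$) that on every input $F.\emptyset$, $F$ a propositional formula, halt with output $\emptyset.0$ if $F$ is satisfiable and $\emptyset.1$ if $F$ is unsatisfiable. *)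

From Stdlib Require Import List.
Import ListNotations.

Inductive gterm : Type :=
| emp  : gterm
| zero : gterm
| one  : gterm
| dot  : gterm -> gterm -> gterm.   (* s.z  (infix "." associates to the right) *)

Inductive term : Type :=
| var  : nat -> term
| temp : term
| tzero : term
| tone : term
| tdot : term -> term -> term.

Fixpoint emb (g : gterm) : term :=
  match g with
  | emp => temp | zero => tzero | one => tone
  | dot s t => tdot (emb s) (emb t)
  end.

Inductive form : Type :=
| fT   : term -> term -> term -> form
| fU   : term -> term -> term -> term -> term -> term -> term -> form
| fFal : form
| fImp : form -> form -> form
| fAnd : form -> form -> form
| fOr  : form -> form -> form
| fAll : form -> form
| fEx  : form -> form.

Fixpoint tsubst (sg : nat -> term) (t : term) : term :=
  match t with
  | var n => sg n
  | temp => temp | tzero => tzero | tone => tone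
  | tdot a b => tdot (tsubst sg a) (tsubst sg b)
  end.

Definition shift : nat -> term := fun n => var (S n).

Definition up (sg : nat -> term) : nat -> term :=
  fun n => match n with 0 => var 0 | S k => tsubst shift (sg k) end.

Fixpoint fsubst (sg : nat -> term) (f : form) : form :=
  match f with
  | fT a b c => fT (tsubst sg a) (tsubst sg b) (tsubst sg c)
  | fU a b c d e g h => fU (tsubst sg a) (tsubst sg b) (tsubst sg c) (tsubst sg d)
                           (tsubst sg e) (tsubst sg g) (tsubst sg h)
  | fFal => fFal
  | fImp p q => fImp (fsubst sg p) (fsubst sg q)
  | fAnd p q => fAnd (fsubst sg p) (fsubst sg q)
  | fOr p q => fOr (fsubst sg p) (fsubst sg q)
  | fAll p => fAll (fsubst (up sg) p)
  | fEx p => fEx (fsubst (up sg) p)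
  end.

Definition lift (f : form) : form := fsubst shift f.

Definition inst (t : term) : nat -> term :=
  fun n => match n with 0 => t | S k => var k end.

Inductive prv : list form -> form -> Prop :=
| pAx   G A   : In A G -> prv G A
| pImpI G A B : prv (A :: G) B -> prv G (fImp A B)
| pImpE G A B : prv G (fImp A B) -> prv G A -> prv G B
| pAndI G A B : prv G A -> prv G B -> prv G (fAnd A B)
| pAndE1 G A B : prv G (fAnd A B) -> prv G A
| pAndE2 G A B : prv G (fAnd A B) -> prv G B
| pOrI1 G A B : prv G A -> prv G (fOr A B)
| pOrI2 G A B : prv G B -> prv G (fOr A B)
| pOrE  G A B C : prv G (fOr A B) -> prv (A :: G) C -> prv (B :: G) C -> prv G C
| pFalE G A   : prv G fFal -> prv G A
| pRAA  G A   : prv (fImp A fFal :: G) fFal -> prv G A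
| pAllI G A   : prv (map lift G) A -> prv G (fAll A)
| pAllE G t A : prv G (fAll A) -> prv G (fsubst (inst t) A)
| pExI  G t A : prv G (fsubst (inst t) A) -> prv G (fEx A)
| pExE  G A B : prv G (fEx A) -> prv (A :: map lift G) (lift B) -> prv G B.

Fixpoint alls (n : nat) (f : form) : form :=
  match n with 0 => f | S k => fAll (alls k f) end.

Definition tquint (q s p r d j : term) : term :=
  tdot q (tdot s (tdot p (tdot r (tdot d j)))).

Definition v (n : nat) : term := var n.

(* (1) T(i,a,u) ⊃ U(∅,∅,a.∅,1,i,i,u)      with i,a,u = v0,v1,v2 *)
Definition ax1 : form :=
  alls 3 (fImp (fT (v 0) (v 1) (v 2))
               (fU temp temp (tdot (v 1) temp) tone (v 0) (v 0) (v 2))).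
(* (2) U(∅,∅,a.∅,1,i,i,u) ⊃ T(i,a,u) *)
Definition ax2 : form :=
  alls 3 (fImp (fU temp temp (tdot (v 1) temp) tone (v 0) (v 0) (v 2))
               (fT (v 0) (v 1) (v 2))).
(* (3) U(x,s,z,0,i,i,x)        x,s,z,i = v0..v3 *)
Definition ax3 : form :=
  alls 4 (fU (v 0) (v 1) (v 2) tzero (v 3) (v 3) (v 0)).
(* (4) U(x,v,r.z,p,i,i,u) ⊃ U(x.v,s,z,q,q.s.p.r.0.j,i,u)
       x,v,r,z,p,i,u,s,q,j = v0..v9 *)
Definition ax4 : form :=
  alls 10 (fImp (fU (v 0) (v 1) (tdot (v 2) (v 3)) (v 4) (v 5) (v 5) (v 6))
                (fU (tdot (v 0) (v 1)) (v 7) (v 3) (v 8)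
                    (tquint (v 8) (v 7) (v 4) (v 2) tzero (v 9)) (v 5) (v 6))).
(* (5) U(x.r,v,z,p,i,i,u) ⊃ U(x,s,v.z,q,q.s.p.r.1.j,i,u)
       x,r,v,z,p,i,u,s,q,j = v0..v9 *)
Definition ax5 : form :=
  alls 10 (fImp (fU (tdot (v 0) (v 1)) (v 2) (v 3) (v 4) (v 5) (v 5) (v 6))
                (fU (v 0) (v 7) (tdot (v 2) (v 3)) (v 8)
                    (tquint (v 8) (v 7) (v 4) (v 1) tone (v 9)) (v 5) (v 6))).
(* (6) U(x,s,z,q,j,i,u) ⊃ U(x,s,z,q,q'.s'.p.r.d.j,i,u)
       x,s,z,q,j,i,u,q',s',p,r,d = v0..v11 *)
Definition ax6 : form :=
  alls 12 (fImp (fU (v 0) (v 1) (v 2) (v 3) (v 4) (v 5) (v 6))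
                (fU (v 0) (v 1) (v 2) (v 3)
                    (tquint (v 7) (v 8) (v 9) (v 10) (v 11) (v 4)) (v 5) (v 6))).

Definition B : form :=
  fAnd ax1 (fAnd ax2 (fAnd ax3 (fAnd ax4 (fAnd ax5 ax6)))).

Definition exT (i a : gterm) : form := fEx (fT (emb i) (emb a) (var 0)).

Definition gquint (q s p r d j : gterm) : gterm :=
  dot q (dot s (dot p (dot r (dot d j)))).

Inductive quint_in : gterm -> gterm -> gterm -> gterm -> gterm -> gterm -> Prop :=
| qi_here q s p r d j : quint_in (gquint q s p r d j) q s p r d
| qi_later q' s' p' r' d' j q s p r d :
    quint_in j q s p r d -> quint_in (gquint q' s' p' r' d' j) q s p r d.

(* configurations: (left tape x, scanned symbol s, right tape z, state q);
   the left tape x.v has v as the cell adjacent to the head *)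
Record config := Cfg { cl : gterm; cs : gterm; cr : gterm; cq : gterm }.

Inductive step (i : gterm) : config -> config -> Prop :=
| step_left x v s r z q p :       (* quintuple q.s.p.r.0 : write r, move left *)
    quint_in i q s p r zero ->
    step i (Cfg (dot x v) s z q) (Cfg x v (dot r z) p)
| step_right x v s r z q p :      (* quintuple q.s.p.r.1 : write r, move right *)
    quint_in i q s p r one ->
    step i (Cfg x s (dot v z) q) (Cfg (dot x r) v z p).

Inductive reach (i : gterm) : config -> config -> Prop :=
| reach_refl c : reach i c c
| reach_step c1 c2 c3 : step i c1 c2 -> reach i c2 c3 -> reach i c1 c3.

Definition halts_with (i a u : gterm) : Prop :=
  exists s z, reach i (Cfg emp emp (dot a emp) one) (Cfg u s z zero).

(* right-tape lists; every ground term counts as a tape symbol *)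
Inductive inL : gterm -> Prop :=
| inL_nil : inL emp
| inL_cons s z : inL z -> inL (dot s z).

Inductive inM : gterm -> Prop :=
| inM_nil : inM emp
| inM_cons q s p r d j : (d = zero \/ d = one) -> inM j -> inM (gquint q s p r d j).

Definition deterministic (i : gterm) : Prop :=
  forall q s p r d p' r' d',
    quint_in i q s p r d -> quint_in i q s p' r' d' -> p = p' /\ r = r' /\ d = d'.

Inductive pform : Type :=
| PVar : nat -> pform
| PNot : pform -> pform
| PAnd : pform -> pform -> pform
| POr  : pform -> pform -> pform
| PImp : pform -> pform -> pform.

Fixpoint peval (val : nat -> bool) (F : pform) : bool :=
  match F with
  | PVar n => val n
  | PNot G => negb (peval val G)
  | PAnd G H => andb (peval val G) (peval val H)
  | POr G H => orb (peval val G) (peval val H)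
  | PImp G H => orb (negb (peval val G)) (peval val H)
  end.

Definition satisfiable (F : pform) : Prop := exists val, peval val F = true.

(* 𝒰, relative to an encoding [enc] of propositional formulas as tape symbols *)
Definition inUU (enc : pform -> gterm) (i : gterm) : Prop :=
  inM i /\ deterministic i /\
  forall F : pform,
    (satisfiable F -> halts_with i (dot (enc F) emp) (dot emp zero)) /\
    (~ satisfiable F -> halts_with i (dot (enc F) emp) (dot emp one)).

From Stdlib Require Import List Classical.
Import ListNotations.

(* We interpret formulas in the term model
   (the domain is the set of ground terms) with arbitrary interpretations of
   the predicates T and U, prove the natural-deduction calculus sound for
   every such interpretation, and then exhibit the intended one: T(i,a,u) is
   "machine i halts on a with output u" and U(x,s,z,q,j,i,u) is "if j is a
   tail of the code i, then i started in configuration (x,s,z,q) halts with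
   output u".  Under it every axiom of B is true, so a derivation of
   exists u T(i,a,u) from B yields a halting computation.

   Axioms (3)-(6) of B let us derive
   U(c,i,i,u) backwards along a halting computation from c: (3) covers the
   halting configuration, (4)/(5) a left/right move by the first quintuple
   of a code, and (6) skips quintuples to reach the one used.  Axiom (2)
   then turns U(initial configuration,i,i,u) into T(i,a,u). *)

Fixpoint teval (rho : nat -> gterm) (t : term) : gterm :=
  match t with
  | var n => rho n | temp => emp | tzero => zero | tone => one
  | tdot a b => dot (teval rho a) (teval rho b)
  end.

Definition scons (x : gterm) (rho : nat -> gterm) (n : nat) : gterm :=
  match n with 0 => x | S k => rho k end.

Lemma teval_ext (rho rho' : nat -> gterm) (t : term) :
  (forall n, rho n = rho' n) -> teval rho t = teval rho' t.
Proof. intros H; induction t; simpl; congruence. Qed.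

Lemma teval_subst (rho : nat -> gterm) (sg : nat -> term) (t : term) :
  teval rho (tsubst sg t) = teval (fun n => teval rho (sg n)) t.
Proof. induction t; simpl; congruence. Qed.

Lemma teval_emb (rho : nat -> gterm) (g : gterm) : teval rho (emb g) = g.
Proof. induction g; simpl; congruence. Qed.

Lemma tsubst_emb (sg : nat -> term) (g : gterm) : tsubst sg (emb g) = emb g.
Proof. induction g; simpl; congruence. Qed.

Section TermModel.

Variable PT : gterm -> gterm -> gterm -> Prop.
Variable PU : gterm -> gterm -> gterm -> gterm -> gterm -> gterm -> gterm -> Prop.

Fixpoint sat (rho : nat -> gterm) (f : form) : Prop :=
  match f with
  | fT a b c => PT (teval rho a) (teval rho b) (teval rho c)
  | fU a b c d e g h => PU (teval rho a) (teval rho b) (teval rho c) (teval rho d)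
                          (teval rho e) (teval rho g) (teval rho h)
  | fFal => False
  | fImp p q => sat rho p -> sat rho q
  | fAnd p q => sat rho p /\ sat rho q
  | fOr p q => sat rho p \/ sat rho q
  | fAll p => forall x, sat (scons x rho) p
  | fEx p => exists x, sat (scons x rho) p
  end.

Lemma sat_ext (A : form) :
  forall rho rho', (forall n, rho n = rho' n) -> (sat rho A <-> sat rho' A).
Proof.
  induction A; intros rho rho' H; simpl;
    rewrite ?(teval_ext rho rho' _ H); try tauto.
  - rewrite (IHA1 rho rho' H), (IHA2 rho rho' H); tauto.
  - rewrite (IHA1 rho rho' H), (IHA2 rho rho' H); tauto.
  - rewrite (IHA1 rho rho' H), (IHA2 rho rho' H); tauto.
  - split; intros H1 x; apply (IHA (scons x rho) (scons x rho')); try apply H1;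
      intros [|n]; simpl; auto.
  - split; intros [x H1]; exists x; apply (IHA (scons x rho) (scons x rho')); auto;
      intros [|n]; simpl; auto.
Qed.

Lemma sat_subst (A : form) :
  forall rho sg, sat rho (fsubst sg A) <-> sat (fun n => teval rho (sg n)) A.
Proof.
  induction A; intros rho sg; simpl; rewrite ?teval_subst; try tauto.
  - rewrite IHA1, IHA2; tauto.
  - rewrite IHA1, IHA2; tauto.
  - rewrite IHA1, IHA2; tauto.
  - split; intros H1 x; specialize (H1 x); rewrite IHA in *;
      (eapply sat_ext; [|exact H1]); intros [|n]; simpl; auto;
      rewrite teval_subst; apply teval_ext; reflexivity.
  - split; intros [x H1]; exists x; rewrite IHA in *;
      (eapply sat_ext; [|exact H1]); intros [|n]; simpl; auto;
      rewrite teval_subst; apply teval_ext; reflexivity.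
Qed.

Lemma sat_lift (x : gterm) (rho : nat -> gterm) (A : form) :
  sat (scons x rho) (lift A) <-> sat rho A.
Proof. unfold lift; rewrite sat_subst; apply sat_ext; reflexivity. Qed.

Lemma sat_inst (rho : nat -> gterm) (t : term) (A : form) :
  sat rho (fsubst (inst t) A) <-> sat (scons (teval rho t) rho) A.
Proof. rewrite sat_subst; apply sat_ext; intros [|n]; reflexivity. Qed.

Theorem soundness (G : list form) (A : form) :
  prv G A -> forall rho, (forall C, In C G -> sat rho C) -> sat rho A.
Proof.
  assert (lifted : forall x rho G, (forall C, In C G -> sat rho C) ->
                     forall C, In C (map lift G) -> sat (scons x rho) C).
  { intros x rho G' HG C HC; apply in_map_iff in HC as [C' [<- HC']].
    apply sat_lift; auto. }
  induction 1; intros rho HG; simpl in *.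
  - auto.
  - intros HA; apply IHprv; intros C [<-|HC]; auto.
  - apply IHprv1; auto.
  - split; auto.
  - apply (IHprv rho HG).
  - apply (IHprv rho HG).
  - left; auto.
  - right; auto.
  - destruct (IHprv1 rho HG) as [HA|HB].
    + apply IHprv2; intros C0 [<-|HC]; auto.
    + apply IHprv3; intros C0 [<-|HC]; auto.
  - destruct (IHprv rho HG).
  - apply NNPP; intros HA; apply (IHprv rho); intros C [<-|HC]; simpl; auto.
  - intros x; apply IHprv, lifted, HG.
  - apply sat_inst; apply (IHprv rho HG).
  - exists (teval rho t); apply sat_inst; auto.
  - destruct (IHprv1 rho HG) as [x Hx].
    apply (sat_lift x rho), IHprv2; intros C [<-|HC]; [exact Hx|].
    exact (lifted x rho G HG C HC).
Qed.

End TermModel.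

Inductive tail_of : gterm -> gterm -> Prop :=
| tail_refl i : tail_of i i
| tail_drop q s p r d j i : tail_of (gquint q s p r d j) i -> tail_of j i.

Lemma tail_of_quint_in (j i q s p r d : gterm) :
  tail_of (gquint q s p r d j) i -> quint_in i q s p r d.
Proof.
  intros H. remember (gquint q s p r d j) as k.
  assert (Hk : quint_in k q s p r d) by (subst; constructor). clear Heqk.
  induction H; auto. apply IHtail_of. constructor; auto.
Qed.

Definition Usem (x s z q j i u : gterm) : Prop :=
  tail_of j i -> exists s' z', reach i (Cfg x s z q) (Cfg u s' z' zero).

Lemma B_valid (rho : nat -> gterm) : sat halts_with Usem rho B.
Proof.
  unfold B, ax1, ax2, ax3, ax4, ax5, ax6; simpl; unfold Usem.
  repeat split.
  - intros u a i [s [z H]] _. eauto.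
  - intros u a i H. exact (H (tail_refl _)).
  - intros i z s x _. exists s, z. constructor.
  - intros j q s u i p z r v0 x H Hs.
    destruct (H (tail_refl _)) as [s' [z' H']]. exists s', z'.
    econstructor; [|exact H']. constructor. eapply tail_of_quint_in; eauto.
  - intros j q s u i p z v0 r x H Hs.
    destruct (H (tail_refl _)) as [s' [z' H']]. exists s', z'.
    econstructor; [|exact H']. constructor. eapply tail_of_quint_in; eauto.
  - intros d r p s' q' u i j q z s x H Hs. apply H. eapply tail_drop; eauto.
Qed.

Lemma provable_halts (i a : gterm) :
  prv [B] (exT i a) -> exists u, halts_with i a u.
Proof.
  intros H.
  destruct (soundness halts_with Usem _ _ H (fun _ => emp)) as [u Hu].
  - intros C [<-|[]]; apply B_valid.
  - simpl in Hu; rewrite !teval_emb in Hu. exists u; exact Hu.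
Qed.

Definition Uground (x s z q j i u : gterm) : form :=
  fU (emb x) (emb s) (emb z) (emb q) (emb j) (emb i) (emb u).

Definition Ucfg (c : config) (i u : gterm) : form :=
  Uground (cl c) (cs c) (cr c) (cq c) i i u.

Ltac instantiate_ground H g :=
  apply (pAllE _ (emb g)) in H; simpl in H; rewrite ?tsubst_emb in H.

Section DerivationsFromB.

Variable G : list form.
Hypothesis G_B : prv G B.

Lemma B_axioms :
  prv G ax1 /\ prv G ax2 /\ prv G ax3 /\ prv G ax4 /\ prv G ax5 /\ prv G ax6.
Proof.
  pose proof G_B as H; unfold B in H.
  repeat (split; [exact (pAndE1 _ _ _ H) | apply pAndE2 in H]); exact H.
Qed.

Lemma U_halt (x s z i : gterm) : prv G (Uground x s z zero i i x).
Proof.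
  destruct B_axioms as (_ & _ & H & _); unfold ax3, alls in H.
  instantiate_ground H i; instantiate_ground H z;
  instantiate_ground H s; instantiate_ground H x.
  exact H.
Qed.

Lemma U_skip (x s z q j i u q' s' p r d : gterm) :
  prv G (Uground x s z q j i u) ->
  prv G (Uground x s z q (gquint q' s' p r d j) i u).
Proof.
  intros H0. destruct B_axioms as (_ & _ & _ & _ & _ & H); unfold ax6, alls in H.
  instantiate_ground H d; instantiate_ground H r; instantiate_ground H p;
  instantiate_ground H s'; instantiate_ground H q'; instantiate_ground H u;
  instantiate_ground H i; instantiate_ground H j; instantiate_ground H q;
  instantiate_ground H z; instantiate_ground H s; instantiate_ground H x.
  exact (pImpE _ _ _ H H0).
Qed.

Lemma U_left (x v0 r z p i u s q j : gterm) :
  prv G (Uground x v0 (dot r z) p i i u) ->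
  prv G (Uground (dot x v0) s z q (gquint q s p r zero j) i u).
Proof.
  intros H0. destruct B_axioms as (_ & _ & _ & H & _); unfold ax4, alls in H.
  instantiate_ground H j; instantiate_ground H q; instantiate_ground H s;
  instantiate_ground H u; instantiate_ground H i; instantiate_ground H p;
  instantiate_ground H z; instantiate_ground H r; instantiate_ground H v0;
  instantiate_ground H x.
  exact (pImpE _ _ _ H H0).
Qed.

Lemma U_right (x r v0 z p i u s q j : gterm) :
  prv G (Uground (dot x r) v0 z p i i u) ->
  prv G (Uground x s (dot v0 z) q (gquint q s p r one j) i u).
Proof.
  intros H0. destruct B_axioms as (_ & _ & _ & _ & H & _); unfold ax5, alls in H.
  instantiate_ground H j; instantiate_ground H q; instantiate_ground H s;
  instantiate_ground H u; instantiate_ground H i; instantiate_ground H p;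
  instantiate_ground H z; instantiate_ground H v0; instantiate_ground H r;
  instantiate_ground H x.
  exact (pImpE _ _ _ H H0).
Qed.

(* A move by any quintuple of the code k: skip to it with (6), then apply
   (4) or (5). *)
Lemma U_move (k q s p r d x v0 z i u : gterm) :
  quint_in k q s p r d ->
  (d = zero -> prv G (Uground x v0 (dot r z) p i i u) ->
   prv G (Uground (dot x v0) s z q k i u)) /\
  (d = one -> prv G (Uground (dot x r) v0 z p i i u) ->
   prv G (Uground x s (dot v0 z) q k i u)).
Proof.
  induction 1 as [q s p r d j | q' s' p' r' d' j q s p r d _ IH]; split; intros Hd H0.
  - subst d; apply U_left; exact H0.
  - subst d; apply U_right; exact H0.
  - apply U_skip, (proj1 IH Hd H0).
  - apply U_skip, (proj2 IH Hd H0).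
Qed.

Lemma U_step (i u : gterm) (c c' : config) :
  step i c c' -> prv G (Ucfg c' i u) -> prv G (Ucfg c i u).
Proof.
  intros [x v0 s r z q p Hq | x v0 s r z q p Hq]; unfold Ucfg; simpl.
  - exact (proj1 (U_move _ _ _ _ _ _ _ _ _ _ _ Hq) eq_refl).
  - exact (proj2 (U_move _ _ _ _ _ _ _ _ _ _ _ Hq) eq_refl).
Qed.

Lemma U_reach (i u s z : gterm) (c : config) :
  reach i c (Cfg u s z zero) -> prv G (Ucfg c i u).
Proof.
  intros H; remember (Cfg u s z zero) as c_halt.
  induction H as [c | c1 c2 c3 Hstep _ IH]; subst.
  - apply U_halt.
  - exact (U_step _ _ _ _ Hstep (IH eq_refl)).
Qed.

Lemma halts_provable (i a u : gterm) : halts_with i a u -> prv G (exT i a).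
Proof.
  intros [s [z H]].
  pose proof (U_reach _ _ _ _ _ H) as HU; unfold Ucfg in HU; simpl in HU.
  destruct B_axioms as (_ & H2 & _); unfold ax2, alls in H2.
  instantiate_ground H2 u; instantiate_ground H2 a; instantiate_ground H2 i.
  apply (pExI _ (emb u)); simpl; rewrite ?tsubst_emb.
  exact (pImpE _ _ _ H2 HU).
Qed.

End DerivationsFromB.

Theorem corollary3 :
  forall (enc : pform -> gterm) (i a : gterm),
    inUU enc i -> inL a ->
    ((exists u, halts_with i a u) <-> prv [B] (exT i a)).
Proof.
  intros enc i a _ _; split.
  - intros [u Hu].
    exact (halts_provable [B] (pAx [B] B (in_eq B [])) i a u Hu).
  - apply provable_halts.
Qed.
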